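(* For $n>2$, the homomorphism $\iota\colon G_n^2\to G_{n,\mathcal{P}}^2$ defined by $\iota(a_{ij})=a_{ij}^0$ is a monomorphism.
   Context: $G_n^2$ is the group with generators $a_{ij}=a_{\{i,j\}}$ for $2$-element subsets $\{i,j\}\subset\{1,\dots,n\}$ and relations $a_{ij}^2=1$; $a_{ij}a_{kl}=a_{kl}a_{ij}$ for distinct $i,j,k,l$; $a_{ij}a_{ik}a_{jk}=a_{jk}a_{ik}a_{ij}$ for distinct $i,j,k$. The group $G_{n,\mathcal{P}}^2$ ($G_n^2$ with parity) has generators $a_{ij}^{\epsilon}=a_{\{i,j\}}^{\epsilon}$ for $2$-element subsets $\{i,j\}$ and $\epsilon\in\{0,1\}$, with relations $(a_{ij}^\epsilon)^2=1$; $a_{ij}^{\epsilon}a_{kl}^{\epsilon'}=a_{kl}^{\epsilon'}a_{ij}^{\epsilon}$ for $\{i,j\}\cap\{k,l\}=\emptyset$ and all $\epsilon,\epsilon'$; and $a_{ij}^{\epsilon_{ij}}a_{ik}^{\epsilon_{ik}}a_{jk}^{\epsilon_{jk}}=a_{jk}^{\epsilon_{jk}}a_{ik}^{\epsilon_{ik}}a_{ij}^{\epsilon_{ij}}$ for distinct $i,j,k$ whenever $\epsilon_{ij}+\epsilon_{ik}+\epsilon_{jk}\equiv 0\pmod 2$. *)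

From mathcomp Require Import all_boot.
Set Implicit Arguments. Unset Strict Implicit. Unset Printing Implicit Defensive.

(* A letter (x, b): b = false means x, b = true means x^{-1}. *)
Definition letter (T : Type) := (T * bool)%type.
Definition word (T : Type) := seq (letter T).
Definition posw (T : Type) (u : seq T) : word T := [seq (x, false) | x <- u].

(* Equality in the group < T | u = v for R u v >. *)
Inductive pres_eq (T : Type) (R : seq T -> seq T -> Prop) : word T -> word T -> Prop :=
| pe_rel u v : R u v -> pres_eq R (posw u) (posw v)
| pe_cancel1 x : pres_eq R [:: (x, false); (x, true)] [::]
| pe_cancel2 x : pres_eq R [:: (x, true); (x, false)] [::]
| pe_refl u : pres_eq R u u
| pe_sym u v : pres_eq R u v -> pres_eq R v u
| pe_trans u v w : pres_eq R u v -> pres_eq R v w -> pres_eq R u w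
| pe_cat u u' v v' : pres_eq R u u' -> pres_eq R v v' -> pres_eq R (u ++ v) (u' ++ v').

(* Generators a_{ij}: 2-element subsets of {1..n}, modelled as 'I_n. *)
Definition gen (n : nat) := {A : {set 'I_n} | #|A| == 2}.

Definition G2_rel (n : nat) (u v : seq (gen n)) : Prop :=
  (exists x : gen n, u = [:: x; x] /\ v = [::])
  \/ (exists x y : gen n, [disjoint val x & val y] /\ u = [:: x; y] /\ v = [:: y; x])
  \/ (exists (i j k : 'I_n) (x y z : gen n),
        [/\ i != j, i != k & j != k] /\
        [/\ val x = [set i; j], val y = [set i; k] & val z = [set j; k]] /\
        u = [:: x; y; z] /\ v = [:: z; y; x]).

(* Defining relations of G_{n,P}^2; generators a_{ij}^eps, eps : bool (false = 0). *)
Definition G2P_rel (n : nat) (u v : seq (gen n * bool)) : Prop :=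
  (exists x : gen n * bool, u = [:: x; x] /\ v = [::])
  \/ (exists x y : gen n * bool,
        [disjoint val x.1 & val y.1] /\ u = [:: x; y] /\ v = [:: y; x])
  \/ (exists (i j k : 'I_n) (x y z : gen n) (eij eik ejk : bool),
        [/\ i != j, i != k & j != k] /\
        [/\ val x = [set i; j], val y = [set i; k] & val z = [set j; k]] /\
        addb eij (addb eik ejk) = false /\
        u = [:: (x, eij); (y, eik); (z, ejk)] /\
        v = [:: (z, ejk); (y, eik); (x, eij)]).

Definition G2_eq (n : nat) := pres_eq (@G2_rel n).
Definition G2P_eq (n : nat) := pres_eq (@G2P_rel n).

Definition iota_word (n : nat) (w : word (gen n)) : word (gen n * bool) :=
  [seq ((l.1, false), l.2) | l <- w].

(* Erasing the parity, a_{ij}^eps |-> a_{ij}, sends every defining relation of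
   G_{n,P}^2 to a defining relation of G_n^2, so it induces a homomorphism
   G_{n,P}^2 -> G_n^2; it is a left inverse of iota, hence iota is injective.
   The argument works for every n. *)
From mathcomp Require Import all_boot.

Definition mapw (T T' : Type) (g : T -> T') (w : word T) : word T' :=
  [seq (g l.1, l.2) | l <- w].
Arguments mapw {T T'} g w.

Lemma mapw_posw (T T' : Type) (g : T -> T') (s : seq T) :
  mapw g (posw s) = posw (map g s).
Proof. by elim: s => //= x s ->. Qed.

Lemma pres_eq_mapw (T T' : Type) (g : T -> T') (R : seq T -> seq T -> Prop)
    (R' : seq T' -> seq T' -> Prop) :
    (forall u v, R u v -> R' (map g u) (map g v)) ->
  forall u v, pres_eq R u v -> pres_eq R' (mapw g u) (mapw g v).
Proof.
move=> gR u v; elim=> {u v}.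
- by move=> u v /gR; rewrite !mapw_posw; apply: pe_rel.
- by move=> x; apply: pe_cancel1.
- by move=> x; apply: pe_cancel2.
- by move=> u; apply: pe_refl.
- by move=> u v _; apply: pe_sym.
- by move=> u v w _ + _; apply: pe_trans.
- by move=> u u' v v' _ + _; rewrite /mapw !map_cat; apply: pe_cat.
Qed.

Section ParityErasure.

Variable n : nat.

Definition erase_parity (w : word (gen n * bool)) : word (gen n) := mapw fst w.

Lemma erase_parityK : cancel (@iota_word n) erase_parity.
Proof. by elim=> //= -[x b] w ->. Qed.

Lemma G2_rel_iota (u v : seq (gen n)) :
  G2_rel u v -> G2P_rel [seq (x, false) | x <- u] [seq (x, false) | x <- v].
Proof.
case=> [[x [-> ->]] | [[x [y [xy [-> ->]]]] | [i [j [k [x [y [z [ijk [xyz [-> ->]]]]]]]]]]].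
- by left; exists (x, false).
- by right; left; exists (x, false), (y, false).
- by right; right; exists i, j, k, x, y, z, false, false, false.
Qed.

Lemma G2P_rel_erase (u v : seq (gen n * bool)) :
  G2P_rel u v -> G2_rel (map fst u) (map fst v).
Proof.
case=> [[x [-> ->]] | [[x [y [xy [-> ->]]]] |
        [i [j [k [x [y [z [e1 [e2 [e3 [ijk [xyz [_ [-> ->]]]]]]]]]]]]]]].
- by left; exists x.1.
- by right; left; exists x.1, y.1.
- by right; right; exists i, j, k, x, y, z.
Qed.

Lemma G2_eq_iota (u v : word (gen n)) :
  G2_eq u v -> G2P_eq (iota_word u) (iota_word v).
Proof. exact: pres_eq_mapw G2_rel_iota u v. Qed.

Lemma G2P_eq_erase (u v : word (gen n * bool)) :
  G2P_eq u v -> G2_eq (erase_parity u) (erase_parity v).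
Proof. exact: pres_eq_mapw G2P_rel_erase u v. Qed.

End ParityErasure.

Theorem mainTheorem3 (n : nat) (hn : 2 < n) :
  (forall u v : word (gen n), G2_eq u v -> G2P_eq (iota_word u) (iota_word v)) /\
  (forall u v : word (gen n), G2P_eq (iota_word u) (iota_word v) -> G2_eq u v).
Proof.
split=> [|u v]; first exact: G2_eq_iota.
by move/G2P_eq_erase; rewrite !erase_parityK.
Qed.
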